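(* Let $r \geq 3$ be a fixed integer and $F$ a graph with chromatic number $\chi(F) \leq r$. Then there is a positive constant $C$, depending on $r$ and $F$, such that \[ \mathrm{ex}_r ( n , F^+) \leq C n^{ r- 1 /x^{r - 1} }, \quad\text{where } x = \binom{r}{2} |V(F)|^2 + |V(F)|. \]
   Context: The $r$-uniform expansion $F^+$ of a graph $F$ is obtained by replacing each edge $e$ of $F$ by $e\cup S_e$, where the $S_e$ are sets of $r-2$ new vertices not in $V(F)$, pairwise disjoint for distinct edges. $\mathrm{ex}_r(n,F^+)$ is the maximum number of edges in an $n$-vertex $r$-uniform hypergraph with no subhypergraph isomorphic to $F^+$. *)

From HB Require Import structures.
From mathcomp Require Import all_boot all_order all_algebra.
From mathcomp Require Import reals exp.
Set Implicit Arguments. Unset Strict Implicit. Unset Printing Implicit Defensive.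

Definition simple_graph (T : finType) (adj : rel T) : Prop :=
  symmetric adj /\ irreflexive adj.

Definition gedges (T : finType) (adj : rel T) : {set {set T}} :=
  [set [set x; y] | x in T, y in T & adj x y].

Definition colorable (T : finType) (adj : rel T) (k : nat) : Prop :=
  exists c : T -> 'I_k, forall x y, adj x y -> c x != c y.

Definition uniform (V : finType) (r : nat) (H : {set {set V}}) : bool :=
  [forall e in H, #|e| == r].

Definition contains_copy (V1 V2 : finType) (H1 : {set {set V1}})
    (H2 : {set {set V2}}) : bool :=
  [exists f : {ffun V1 -> V2}, injectiveb f && [forall e in H1, (f @: e) \in H2]].

(* The r-uniform expansion F^+ : vertices of F plus, for every edge e of F,
   r-2 new vertices (e,0),...,(e,r-3); the edge e is replaced by
   e together with its r-2 new vertices. *)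
Definition exp_vertex (T : finType) (adj : rel T) (r : nat) : finType :=
  (T + ({e : {set T} | e \in gedges adj} * 'I_(r - 2)))%type.

Definition expansion (T : finType) (adj : rel T) (r : nat)
    : {set {set exp_vertex adj r}} :=
  [set ((@inl T _) @: val e) :|:
       [set (@inr T _ (e, i)) | i : 'I_(r - 2)]
  | e : {e : {set T} | e \in gedges adj}].

Definition ex_exp (T : finType) (adj : rel T) (r n : nat) : nat :=
  \max_(H : {set {set 'I_n}} | uniform r H && ~~ contains_copy (expansion adj r) H)
     #|H|.

From HB Require Import structures.
From mathcomp Require Import all_boot all_order all_algebra.
From mathcomp Require Import reals exp.
From mathcomp Require Import zify ring.
Set Implicit Arguments. Unset Strict Implicit. Unset Printing Implicit Defensive.

(** By Erdos' theorem, an r-uniform hypergraph on n vertices with no complete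
   r-partite subhypergraph K(t,...,t) has O(n^(r - 1/t^(r-1))) edges.  The proof is
   by induction on r: count pairs (T, S) of a t-set T and an (r-1)-set S forming an
   edge with every vertex of T; by convexity (power means and C(d,t) >= (d/t)^t)
   many edges force many such pairs, i.e. a large total size of the links of
   t-sets, and a link containing K(t,...,t) of one uniformity less lifts to a
   K(t,...,t) in the hypergraph.
   A proper r-colouring of F extends to the expansion F^+ so that every expansion
   edge is rainbow, hence F^+ embeds into K(t,...,t) as soon as t >= |V(F^+)|,
   and |V(F^+)| <= C(r,2) |V(F)|^2 + |V(F)|. *)

Lemma leq_exp2rW m n e : m <= n -> m ^ e <= n ^ e.
Proof. by case: e => [//|e] le_mn; rewrite leq_exp2r. Qed.

Lemma leq_expnD a b k : (a + b) ^ k <= 2 ^ k * (a ^ k + b ^ k).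
Proof.
wlog le_ab : a b / a <= b.
  by move=> W; case: (leqP a b) => [|/ltnW] /W; rewrite // addnC [b ^ k + _]addnC.
apply: (@leq_trans ((2 * b) ^ k)); first by apply: leq_exp2rW; lia.
by rewrite expnMn leq_mul2l leq_addl orbT.
Qed.

Lemma bin_le_exp n k : 'C(n, k) <= n ^ k.
Proof.
apply: (@leq_trans (n ^_ k)); first by rewrite -bin_ffact leq_pmulr ?fact_gt0.
have <- : \prod_(i < k) n = n ^ k by rewrite prod_nat_const card_ord.
by rewrite ffact_prod; apply: leq_prod => i _; apply: leq_subr.
Qed.

Lemma exp_le_bin d t : t <= d -> d ^ t <= t ^ t * 'C(d, t).
Proof.
move=> le_td; rewrite -(leq_pmul2r (fact_gt0 t)) -mulnA bin_ffact -ffactnn.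
have prod_const m : \prod_(i < t) m = m ^ t by rewrite prod_nat_const card_ord.
rewrite !ffact_prod -!prod_const -!big_split /=.
by apply: leq_prod => i _; have := ltn_ord i; nia.
Qed.

Lemma exp_le_binS d t : d ^ t <= t ^ t * ('C(d, t) + 1).
Proof.
have [le_td|lt_dt] := leqP t d.
  by apply: leq_trans (exp_le_bin le_td) _; rewrite leq_mul2l leq_addr orbT.
by apply: leq_trans (leq_exp2rW t (ltnW lt_dt)) _; rewrite leq_pmulr ?addn1.
Qed.

Lemma exp_rearrangement x y k : x ^ k * y + y ^ k * x <= x ^ k.+1 + y ^ k.+1.
Proof.
wlog le_xy : x y / x <= y.
  by move=> W; case: (leqP x y) => [|/ltnW] /W; rewrite // addnC [y ^ _ + _]addnC.
have := leq_exp2rW k le_xy; rewrite !expnS; move: (x ^ k) (y ^ k) => X Y; nia.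
Qed.

Lemma chebyshev_sum_exp (I : finType) (A : pred I) (a : I -> nat) k :
  (\sum_(i in A) a i ^ k) * (\sum_(i in A) a i) <= #|A| * \sum_(i in A) a i ^ k.+1.
Proof.
rewrite -sum_nat_const big_distrl /=.
under eq_bigr do rewrite big_distrr /=.
rewrite -(leq_pmul2l (isT : 0 < 2)) !mul2n -!addnn.
rewrite [X in X + _ <= _]exchange_big [X in _ <= _ + X]exchange_big /=.
rewrite -!big_split /=; apply: leq_sum => i _; rewrite -!big_split /=.
by apply: leq_sum => j _; rewrite exp_rearrangement.
Qed.

Lemma power_mean_sum (I : finType) (A : pred I) (a : I -> nat) k :
  (\sum_(i in A) a i) ^ k.+1 <= #|A| ^ k * \sum_(i in A) a i ^ k.+1.
Proof.
elim: k => [|k IH]; first by rewrite mul1n; apply: leq_sum => i _; rewrite expn1.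
rewrite expnSr (expnSr #|A|) -mulnA.
apply: leq_trans (leq_mul IH (leqnn _)) _; rewrite -mulnA leq_mul2l.
by rewrite chebyshev_sum_exp orbT.
Qed.

Lemma sum_exp_le_card_exp (I : finType) (A : pred I) (a : I -> nat) k B :
  0 < k -> (forall i, i \in A -> a i ^ k <= B) ->
  (\sum_(i in A) a i) ^ k <= #|A| ^ k * B.
Proof.
case: k => [//|k] _ le_aB; apply: leq_trans (power_mean_sum A a k) _.
rewrite expnSr -mulnA leq_mul2l -sum_nat_const leq_sum ?orbT //.
Qed.

Lemma imset_lift0 (V : finType) r (F : 'I_r.+1 -> V) :
  [set F j | j : 'I_r.+1] = F ord0 |: [set F (lift ord0 j) | j : 'I_r].
Proof.
apply/setP => x; rewrite in_setU1; apply/imsetP/idP.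
  case=> j _ ->; case: (unliftP ord0 j) => [j'|] ->; last by rewrite eqxx.
  by rewrite imset_f ?orbT.
by case/orP => [/eqP ->|/imsetP [j _ ->]]; [exists ord0 | exists (lift ord0 j)].
Qed.

Section Hypergraph.
Variable V : finType.
Implicit Types (H : {set {set V}}) (S T : {set V}).

(* [f (j, _)] enumerates the j-th part of a copy of K(t,...,t) in H. *)
Definition has_Kpartite H r t :=
  exists f : 'I_r * 'I_t -> V, injective f /\
    forall g : 'I_r -> 'I_t, [set f (j, g j) | j : 'I_r] \in H.

Definition nbhd H S := [set v : V | (v \notin S) && (v |: S \in H)].

Definition link H r T := [set S : {set V} | (#|S| == r) && (T \subset nbhd H S)].

Lemma set0_has_Kpartite H t : set0 \in H -> has_Kpartite H 0 t.
Proof.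
have f : 'I_0 * 'I_t -> V by case=> [[]].
exists f; split=> [[[]]|g] //.
suff -> : [set f (j, g j) | j : 'I_0] = set0 by [].
by apply/setP => x; rewrite inE; apply/imsetP => [[[]]].
Qed.

Lemma has_Kpartite_link H r t T :
  #|T| = t -> has_Kpartite (link H r T) r t -> has_Kpartite H r.+1 t.
Proof.
move=> card_T [f [f_inj f_link]].
have nbhd_f g : T \subset nbhd H [set f (j, g j) | j : 'I_r].
  by have := f_link g; rewrite inE => /andP[].
pose e (i : 'I_t) : V := enum_val (cast_ord (esym card_T) i).
have e_inj : injective e by move=> i1 i2 /enum_val_inj /cast_ord_inj.
have f_notin_T j i : f (j, i) \notin T.
  apply/negP => /(subsetP (nbhd_f (fun=> i))); rewrite inE => /andP[/negP[]].
  exact: imset_f.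
(* T becomes the new part, at index [ord0]. *)
pose f' (p : 'I_r.+1 * 'I_t) := if unlift ord0 p.1 is Some j then f (j, p.2) else e p.2.
exists f'; split=> [[j1 i1] [j2 i2]|g].
  rewrite /f' /=; case: (unliftP ord0 j1) => [j1'|] ->; case: (unliftP ord0 j2) => [j2'|] -> //.
  - by move/f_inj => [-> ->].
  - by move=> eq_fe; move: (f_notin_T j1' i1); rewrite eq_fe enum_valP.
  - by move=> eq_ef; move: (f_notin_T j2' i2); rewrite -eq_ef enum_valP.
  - by move/e_inj ->.
rewrite (imset_lift0 (fun j => f' (j, g j))) /f' /= unlift_none.
under eq_imset do rewrite liftK.
have /subsetP := nbhd_f (fun j => g (lift ord0 j)).
by move/(_ (e (g ord0)) (enum_valP _)); rewrite inE => /andP[].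
Qed.

Section Counting.
Variables (H : {set {set V}}) (r : nat).
Hypothesis H_unif : {in H, forall e : {set V}, #|e| = r.+1}.

Lemma sum_card_link t :
  \sum_(T : {set V} | #|T| == t) #|link H r T| =
  \sum_(S : {set V} | #|S| == r) 'C(#|nbhd H S|, t).
Proof.
under eq_bigr do rewrite -sum1_card.
rewrite (exchange_big_dep (fun S => #|S| == r)) => [|T S _]; last by rewrite inE => /andP[].
apply: eq_bigr => S card_S; rewrite sum1dep_card -cards_draws.
by apply: eq_card => T; rewrite !inE card_S andbC.
Qed.

Lemma card_le_sum_nbhd : #|H| <= \sum_(S : {set V} | #|S| == r) #|nbhd H S|.
Proof.
have edges_le S : #|S| = r -> #|[set e in H | S \subset e]| <= #|nbhd H S|.
  move=> card_S; apply: leq_trans (leq_imset_card (fun v => v |: S) _).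
  apply/subset_leq_card/subsetP => e; rewrite inE => /andP[eH sub_Se].
  have /subsetPn[v ve vS] : ~~ (e \subset S).
    by apply/negP => /subset_leq_card; rewrite H_unif // card_S ltnn.
  have eq_e : v |: S = e.
    apply/eqP; rewrite eqEcard subUset sub1set ve sub_Se cardsU1 vS card_S.
    by rewrite H_unif //= add1n.
  by apply/imsetP; exists v; rewrite // inE vS eq_e eH.
apply: (@leq_trans (\sum_(S : {set V} | #|S| == r) #|[set e in H | S \subset e]|)).
  2: by apply: leq_sum => S /eqP; apply: edges_le.
under [X in _ <= X]eq_bigr do rewrite -sum1_card.
rewrite (exchange_big_dep (mem H)) => [|S e _]; last by rewrite inE => /andP[].
rewrite -sum1_card leq_sum // => e eH; rewrite sum1dep_card.
have -> : #|[set S : {set V} | (#|S| == r) && (e \in [set e in H | S \subset e])]| =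
          'C(#|e|, r).
  by rewrite -cards_draws; apply: eq_card => S; rewrite !inE eH andbC.
by rewrite H_unif // binSn.
Qed.

Lemma card_exp_le_links s : 0 < s ->
  #|H| ^ s <= #|V| ^ (r * s.-1) * s ^ s *
     (\sum_(T : {set V} | #|T| == s) #|link H r T| + #|V| ^ r).
Proof.
move=> s_gt0; set N := #|[set S : {set V} | #|S| == r]|.
have N_le : N <= #|V| ^ r by rewrite /N card_draws bin_le_exp.
have pm := power_mean_sum (fun S : {set V} => #|S| == r) (fun S => #|nbhd H S|) s.-1.
rewrite prednK // -cardsE -/N in pm.
apply: leq_trans (leq_exp2rW s card_le_sum_nbhd) _; apply: leq_trans pm _.
rewrite -mulnA expnM leq_mul ?leq_exp2rW //.
apply: (@leq_trans (\sum_(S : {set V} | #|S| == r) s ^ s * ('C(#|nbhd H S|, s) + 1))).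
  by apply: leq_sum => S _; apply: exp_le_binS.
rewrite -big_distrr big_split /= -sum_card_link sum1dep_card.
by rewrite leq_mul2l leq_add2l N_le orbT.
Qed.

End Counting.
End Hypergraph.

(* |H| = O(n^(r+1 - 1/s^r)), raised to the power s^r to stay in nat. *)
Definition Kpartite_free_bound r s C := forall (V : finType) (H : {set {set V}}),
  {in H, forall e : {set V}, #|e| = r.+1} -> ~ has_Kpartite H r.+1 s ->
  #|H| ^ (s ^ r) <= C * #|V| ^ (r.+1 * s ^ r - 1).

Lemma Kpartite_free_bound0 s : 0 < s -> Kpartite_free_bound 0 s s.
Proof.
move=> s_gt0 V H H_unif H_free; rewrite expn0 mul1n subnn muln1 expn1.
have no_link (T : {set V}) : #|T| == s -> link H 0 T = set0.
  move=> /eqP card_T; apply/setP => S; rewrite in_set0; apply/negP => S_link.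
  have S0 : S = set0 by apply/cards0_eq; move: S_link; rewrite inE => /andP[/eqP].
  by apply/H_free/(has_Kpartite_link card_T)/set0_has_Kpartite; rewrite -S0.
have := card_exp_le_links H_unif s_gt0.
rewrite big1 => [|T /no_link ->]; last by rewrite cards0.
by rewrite !expn0 mul1n add0n muln1 leq_exp2r.
Qed.

Lemma sum_card_link_le r s C (V : finType) (H : {set {set V}}) :
  0 < s -> Kpartite_free_bound r s C -> ~ has_Kpartite H r.+2 s ->
  (\sum_(T : {set V} | #|T| == s) #|link H r.+1 T|) ^ (s ^ r) <=
    C * #|V| ^ (s * s ^ r + (r.+1 * s ^ r - 1)).
Proof.
move=> s_gt0 free_bound H_free.
have link_le (T : {set V}) : #|T| == s ->
    #|link H r.+1 T| ^ (s ^ r) <= C * #|V| ^ (r.+1 * s ^ r - 1).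
  move=> /eqP card_T; apply: free_bound => [S|/(has_Kpartite_link card_T)//].
  by rewrite inE => /andP[/eqP].
have K_gt0 : 0 < s ^ r by rewrite expn_gt0 s_gt0.
apply: leq_trans (sum_exp_le_card_exp K_gt0 link_le) _.
rewrite expnD mulnCA leq_mul // leq_mul // expnM leq_exp2rW //.
by rewrite -cardsE card_draws bin_le_exp.
Qed.

Lemma Kpartite_free_boundS r s C : 0 < s -> Kpartite_free_bound r s C ->
  Kpartite_free_bound r.+1 s (s ^ (s * s ^ r) * 2 ^ (s ^ r) * C.+1).
Proof.
move=> s_gt0 free_bound V H H_unif H_free.
set K := s ^ r; set n := #|V|; set E := s * K + (r.+1 * K - 1).
have K_gt0 : 0 < K by rewrite expn_gt0 s_gt0.
have nr_le : n ^ (r.+1 * K) <= n ^ E.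
  case: n => [|n]; last by rewrite leq_pexp2l //; lia.
  by rewrite exp0n // muln_gt0 K_gt0.
have links_le : (\sum_(T : {set V} | #|T| == s) #|link H r.+1 T| + n ^ r.+1) ^ K <=
    2 ^ K * (C.+1 * n ^ E).
  apply: leq_trans (leq_expnD _ _ _) _; rewrite leq_mul2l -expnM mulSn addnC.
  by rewrite leq_add ?orbT // sum_card_link_le.
rewrite expnS -/K expnM -/n.
apply: leq_trans (leq_exp2rW K (card_exp_le_links H_unif s_gt0)) _.
rewrite !expnMn -!expnM; apply: leq_trans (leq_mul (leqnn _) links_le) _.
have exponentE a k : 0 < a -> 0 < k ->
    r.+2 * (a * k) - 1 = r.+1 * a.-1 * k + (a * k + (r.+1 * k - 1)).
  by case: a k => [|a] [|k] //= _ _; nia.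
by rewrite exponentE // expnD; apply: eq_leq; ring.
Qed.

Lemma erdos_Kpartite r s : 0 < s -> exists C, Kpartite_free_bound r s C.
Proof.
move=> s_gt0; elim: r => [|r [C free_bound]]; first by exists s; apply: Kpartite_free_bound0.
by eexists; apply: Kpartite_free_boundS free_bound.
Qed.

Lemma gedgesP (T : finType) (adj : rel T) e :
  reflect (exists x y, adj x y /\ e = [set x; y]) (e \in gedges adj).
Proof.
apply: (iffP idP) => [/imset2P[x y _]|[x [y [xy ->]]]].
  by rewrite inE => /andP[_ xy] ->; exists x, y.
by apply: imset2_f; rewrite ?inE.
Qed.

Section Embedding.
Variables (T : finType) (adj : rel T) (r : nat) (c : T -> 'I_r.+1).
Hypothesis c_proper : forall x y, adj x y -> c x != c y.
Local Notation edge := {e : {set T} | e \in gedges adj}.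
Local Notation EV := (exp_vertex adj r.+1).

Definition missing_colours (e : {set T}) : {set 'I_r.+1} := ~: (c @: e).

Lemma card_missing_colours (e : edge) : #|missing_colours (val e)| = r.+1 - 2.
Proof.
have /gedgesP[x [y [xy ->]]] := valP e.
by rewrite cardsCs setCK card_ord imsetU1 imset_set1 cards2 c_proper.
Qed.

Definition exp_colour (v : EV) : 'I_r.+1 :=
  match v with
  | inl x => c x
  | inr (e, i) => nth ord0 (enum (missing_colours (val e))) i
  end.

Definition exp_edge (e : edge) : {set EV} :=
  inl @: val e :|: [set inr (e, i) | i : 'I_(r.+1 - 2)].

Lemma exp_colour_inj e : {in exp_edge e &, injective exp_colour}.
Proof.
have /gedgesP[x [y [xy e_xy]]] := valP e.
have size_enum : size (enum (missing_colours (val e))) = r.+1 - 2.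
  by rewrite -cardE card_missing_colours.
have missing_neq z (i : 'I_(r.+1 - 2)) :
    z \in val e -> c z != nth ord0 (enum (missing_colours (val e))) i.
  move=> ze; have : nth ord0 (enum (missing_colours (val e))) i \in missing_colours (val e).
    by rewrite -mem_enum mem_nth // size_enum.
  by apply: contraTneq => <-; rewrite inE negbK imset_f.
move=> v w; rewrite !inE => /orP[/imsetP[z ze ->]|/imsetP[i _ ->]]
    /orP[/imsetP[z' z'e ->]|/imsetP[j _ ->]] /= eq_col.
- have := c_proper xy; move: ze z'e eq_col; rewrite e_xy !inE.
  by move=> /orP[]/eqP-> /orP[]/eqP-> //= ->; rewrite ?eqxx // eq_sym => /eqP.
- by move: (missing_neq z j ze); rewrite eq_col eqxx.
- by move: (missing_neq z' i z'e); rewrite eq_col eqxx.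
- move/eqP: eq_col; rewrite nth_uniq ?size_enum ?enum_uniq // => /eqP eq_ij.
  by congr (inr (_, _)); apply: val_inj.
Qed.

Lemma exp_colour_surj e j : exists2 v, v \in exp_edge e & exp_colour v = j.
Proof.
have [/imsetP[x xe ->]|j_missing] := boolP (j \in c @: val e).
  by exists (inl x); rewrite // !inE imset_f.
have j_enum : j \in enum (missing_colours (val e)) by rewrite mem_enum inE.
have idx_lt : index j (enum (missing_colours (val e))) < r.+1 - 2.
  by rewrite -(card_missing_colours e) cardE index_mem.
exists (inr (e, Ordinal idx_lt)); last by rewrite /= nth_index.
by rewrite !inE imset_f ?orbT.
Qed.

Lemma expansion_in_Kpartite (W : finType) (H : {set {set W}}) t :
  #|EV| <= t -> has_Kpartite H r.+1 t -> contains_copy (expansion adj r.+1) H.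
Proof.
move=> card_EV [f [f_inj f_H]].
pose idx (v : EV) : 'I_t := widen_ord card_EV (enum_rank v).
have idx_inj : injective idx by move=> v w /(congr1 val) /= /val_inj /enum_rank_inj.
apply/existsP; exists [ffun v => f (exp_colour v, idx v)]; apply/andP; split.
  by apply/injectiveP => v w; rewrite !ffunE => /f_inj/(congr1 snd)/idx_inj.
apply/forall_inP => _ /imsetP[e _ ->]; rewrite -/(exp_edge e).
have colour_pick j : exists v, (v \in exp_edge e) && (exp_colour v == j).
  by have [v ve <-] := exp_colour_surj e j; exists v; rewrite ve eqxx.
pose g j := idx (xchoose (colour_pick j)).
suff -> : [ffun v => f (exp_colour v, idx v)] @: exp_edge e =
          [set f (j, g j) | j : 'I_r.+1] by apply: f_H.
apply/setP => y; apply/imsetP/imsetP => [[v ve ->]|[j _ ->]].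
  exists (exp_colour v); rewrite // ffunE /g.
  have /andP[we /eqP col_w] := xchooseP (colour_pick (exp_colour v)).
  by rewrite (exp_colour_inj we ve col_w).
have /andP[we /eqP col_w] := xchooseP (colour_pick j).
by exists (xchoose (colour_pick j)); rewrite // ffunE col_w.
Qed.

End Embedding.

Lemma uniformP (V : finType) r (H : {set {set V}}) :
  reflect {in H, forall e : {set V}, #|e| = r} (uniform r H).
Proof. by apply: (iffP forall_inP) => H_unif e /H_unif => [/eqP|->]. Qed.

Lemma card_gedges (T : finType) (adj : rel T) :
  irreflexive adj -> #|gedges adj| <= 'C(#|T|, 2).
Proof.
move=> adj_irr; rewrite -card_draws.
apply/subset_leq_card/subsetP => _ /gedgesP[x [y [xy ->]]].
have x_neq_y : x != y by apply: contraTneq xy => ->; rewrite adj_irr.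
by rewrite inE cards2 x_neq_y.
Qed.

Lemma card_exp_vertex (T : finType) (adj : rel T) r :
  irreflexive adj -> #|exp_vertex adj r| <= 'C(r, 2) * #|T| ^ 2 + #|T|.
Proof.
move=> adj_irr; rewrite card_sum card_prod card_sig card_ord addnC leq_add2r mulnC.
apply: leq_mul.
  by case: r => [|r] //; rewrite binS bin1 subSS (leq_trans (leq_subr 1 r)) ?leq_addl.
exact: leq_trans (card_gedges adj_irr) (bin_le_exp _ _).
Qed.

Lemma ex_exp_le_exp (T : finType) (adj : rel T) r n : ex_exp adj r n <= n ^ r.
Proof.
apply/bigmax_leqP => H /andP[/uniformP H_unif _].
rewrite -[n in n ^ r]card_ord; apply: leq_trans (bin_le_exp _ r).
rewrite -card_draws; apply/subset_leq_card/subsetP => e eH.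
by rewrite inE H_unif.
Qed.

Lemma ex_exp_Kpartite_bound (T : finType) (adj : rel T) r t :
  colorable adj r.+1 -> 0 < t -> #|exp_vertex adj r.+1| <= t ->
  exists2 C, 0 < C & forall n, ex_exp adj r.+1 n ^ (t ^ r) <= C * n ^ (r.+1 * t ^ r - 1).
Proof.
move=> [c c_proper] t_gt0 card_EV; have [C free_bound] := erdos_Kpartite r t_gt0.
exists C.+1 => // n; rewrite /ex_exp.
set P := fun H : {set {set 'I_n}} =>
  uniform r.+1 H && ~~ contains_copy (expansion adj r.+1) H.
have [H0 PH0|no_H] := pickP P; last by rewrite big_pred0 // exp0n ?expn_gt0 ?t_gt0.
rewrite (bigmax_eq_arg _ PH0); case: arg_maxnP => // H /andP[/uniformP H_unif H_free] _.
apply: leq_trans (free_bound _ _ H_unif _) _.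
  by move/(expansion_in_Kpartite c_proper card_EV); apply/negP.
by rewrite card_ord leq_mul2r leqnSn orbT.
Qed.

Import GRing.Theory Num.Theory.
Local Open Scope ring_scope.

Lemma powR_subVn_exprn (R : realType) (n a k : nat) : (0 < a)%N -> (0 < k)%N ->
  (n%:R `^ (a%:R - k%:R^-1) : R) ^+ k = (n ^ (a * k - 1))%:R.
Proof.
move=> a_gt0 k_gt0; rewrite -powR_mulrn ?powR_ge0 // -powRrM mulrBl mulVf ?pnatr_eq0 -?lt0n //.
rewrite -natrM -(natrB _ (_ : 1 <= a * k)%N) ?muln_gt0 ?a_gt0 //.
by rewrite powR_mulrn // natrX.
Qed.

Lemma ler_nat_powR_subVn (R : realType) (m n C a k : nat) :
  (0 < a)%N -> (0 < k)%N -> (0 < C)%N -> (m ^ k <= C * n ^ (a * k - 1))%N ->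
  (m%:R : R) <= C%:R * n%:R `^ (a%:R - k%:R^-1).
Proof.
move=> a_gt0 k_gt0 C_gt0 m_le.
rewrite -(ler_pXn2r k_gt0) ?nnegrE ?mulr_ge0 ?powR_ge0 //.
rewrite exprMn powR_subVn_exprn // -!natrX -natrM ler_nat (leq_trans m_le) //.
by rewrite leq_mul2r -{1}(expn1 C) leq_pexp2l ?orbT.
Qed.

Unset Implicit Arguments. Set Strict Implicit.

Theorem theorem3p2 (R : realType) (r : nat) (T : finType) (adj : rel T) :
  (3 <= r)%N -> simple_graph adj -> colorable adj r ->
  exists C : R, 0 < C /\
    forall n : nat,
      (ex_exp adj r n)%:R <=
        C * powR (n%:R)
              (r%:R - 1 / (('C(r, 2) * #|T| ^ 2 + #|T|)%N%:R) ^+ (r - 1)).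
Proof.
case: r => [//|r] r_ge3 [_ adj_irr] adj_col; rewrite subSS subn0.
set t := ('C(r.+1, 2) * #|T| ^ 2 + #|T|)%N.
have [t0|t_gt0] := posnP t.
  have r_gt0 : (0 < r)%N by rewrite -ltnS ltnW.
  exists 1; split=> // n; rewrite t0 expr0n gtn_eqF //= !mul1r invr0 subr0.
  by rewrite powR_mulrn ?ler0n // -natrX ler_nat ex_exp_le_exp.
have [C C_gt0 ex_le] :=
  ex_exp_Kpartite_bound adj_col t_gt0 (card_exp_vertex r.+1 adj_irr).
exists C%:R; split=> [|n]; first by rewrite ltr0n.
have tr_gt0 : (0 < t ^ r)%N by rewrite expn_gt0 t_gt0.
by rewrite div1r -natrX; apply: ler_nat_powR_subVn (ex_le n).
Qed.
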